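(* Let $c:[0,\infty)\to[0,\infty)$ be a concave, increasing function with $c(0)=0$, extended to $\mathbb{R}$ by $c(-x)=c(x)$, such that $c^2$ is differentiable and its derivative $(c^2)'$ is strictly convex on $[0,\infty)$. Then there is no satisfactory configuration (with respect to $c$) of $k>3$ vectors in which exactly one mass is negative. Moreover, if a satisfactory configuration $e_1,e_2,e_3$ with $k=3$ has exactly one negative mass, then $e_1,e_2,e_3$ are coplanar.
   Context: Let $d\ge 2$. A set of unit vectors $e_1,\dots,e_k\in\mathbb{R}^d$ with non-zero real masses $m_1,\dots,m_k$ is called a satisfactory configuration (with respect to $c$) if $m_1+\dots+m_k=0$ and for every $i\neq j$ $$\langle e_i,e_j\rangle \leq \frac{c^2(m_i+m_j)-c^2(m_i)-c^2(m_j)}{2c(m_i)c(m_j)}.$$ *)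

From HB Require Import structures.
From mathcomp Require Import all_boot all_order all_algebra.
From mathcomp Require Import all_classical all_reals all_analysis.
Set Implicit Arguments. Unset Strict Implicit. Unset Printing Implicit Defensive.
Import Order.TTheory GRing.Theory Num.Theory.
Import numFieldNormedType.Exports.
Local Open Scope ring_scope.
Local Open Scope classical_set_scope.

Definition dotv (R : realType) (d : nat) (u v : 'rV[R]_d) : R :=
  \sum_(j < d) u 0 j * v 0 j.

Definition satisfactory (R : realType) (c : R -> R) (d k : nat)
    (e : 'I_k -> 'rV[R]_d) (m : 'I_k -> R) : Prop :=
  [/\ (forall i, dotv (e i) (e i) = 1),
      (forall i, m i != 0),
      \sum_(i < k) m i = 0 &
      (forall i j, i != j ->
         dotv (e i) (e j) <=
         ((c (m i + m j)) ^+ 2 - (c (m i)) ^+ 2 - (c (m j)) ^+ 2)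
           / (2 * c (m i) * c (m j)))].

Definition exactly_one_negative (R : realType) (k : nat) (m : 'I_k -> R) : Prop :=
  #|[set i | m i < 0]| = 1%N.

Definition concave_on_nonneg (R : realType) (c : R -> R) : Prop :=
  forall x y t : R, 0 <= x -> 0 <= y -> 0 <= t -> t <= 1 ->
    t * c x + (1 - t) * c y <= c (t * x + (1 - t) * y).

Definition strictly_convex_on_nonneg (R : realType) (f : R -> R) : Prop :=
  forall x y t : R, 0 <= x -> 0 <= y -> x != y -> 0 < t -> t < 1 ->
    f (t * x + (1 - t) * y) < t * f x + (1 - t) * f y.

Definition admissible_c (R : realType) (c : R -> R) : Prop :=
  [/\ c 0 = 0 /\ (forall x, 0 <= x -> 0 <= c x),
      (forall x y, 0 <= x -> x < y -> c x < c y),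
      concave_on_nonneg c,
      (forall x, c (- x) = c x) &
      (* c^2 is differentiable on [0,oo) (one-sided at 0) with derivative
         dc2, and dc2 is strictly convex on [0,oo) *)
      (exists dc2 : R -> R,
        [/\ (forall x : R, 0 < x -> is_derive x (1:R) (fun y : R => (c y) ^+ 2) (dc2 x)),
            (fun h => h^-1 * ((c h) ^+ 2 - (c 0) ^+ 2)) @ 0^'+ --> dc2 0 &
            strictly_convex_on_nonneg dc2])].

(* Put f = c^2 and v = sum_i c(m_i) e_i. The satisfactory inequalities bound
   |v|^2 by the pair energy sum_i f(m_i) + sum_(i<j) (f(m_i+m_j) - f(m_i) - f(m_j))
   of the masses. Merging two masses x, y into x + y changes this energy by
   sum_z delta(x,y,z) over the remaining masses z, where
     delta(x,y,z) = f(x+y) + f(x+z) + f(y+z) - f(x) - f(y) - f(z) - f(x+y+z).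
   For x, y, z > 0, delta(x,y,z) < 0: it is phi(0) - phi(z) for
   phi(t) = f(t+x+y) - f(t+x) - f(t+y) + f(t), whose derivative is positive by
   strict convexity of f'. As f is even, the unique negative mass
   -(x + y + u) contributes delta(x,y,-(x+y+u)) = delta(x,y,u) <= 0. Merging
   positive masses until only one is left (energy 0) shows that the energy is
   <= 0, and < 0 if there were at least three positive masses. So k > 3 is
   impossible, and for k = 3 we get v = 0, a nontrivial linear relation among
   e_1, e_2, e_3. *)

From HB Require Import structures.
From mathcomp Require Import all_boot all_order all_algebra.
From mathcomp Require Import all_classical all_reals all_analysis.
Import Order.TTheory GRing.Theory Num.Theory.
Import numFieldNormedType.Exports.
From mathcomp Require Import ring lra.
Set Implicit Arguments. Unset Strict Implicit. Unset Printing Implicit Defensive.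
Local Open Scope ring_scope.

Section PairEnergy.
Variables (R : numDomainType) (f : R -> R).

Definition pair_excess (a b : R) : R := f (a + b) - f a - f b.

Fixpoint pair_energy (s : seq R) : R :=
  if s is a :: t then f a + \sum_(z <- t) pair_excess a z + pair_energy t else 0.

Definition merge_defect (x y z : R) : R :=
  f (x + y) + f (x + z) + f (y + z) - f x - f y - f z - f (x + y + z).

Lemma pair_excessC a b : pair_excess a b = pair_excess b a.
Proof. by rewrite /pair_excess (addrC a b); ring. Qed.

Lemma pair_energy_merge x y t :
  pair_energy [:: x, y & t] =
  pair_energy (x + y :: t) + \sum_(z <- t) merge_defect x y z.
Proof.
have -> : \sum_(z <- t) merge_defect x y z =
    \sum_(z <- t) pair_excess x z + \sum_(z <- t) pair_excess y z
    - \sum_(z <- t) pair_excess (x + y) z.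
  rewrite -big_split -sumrB; apply: eq_bigr => z _.
  by rewrite /= /merge_defect /pair_excess; ring.
rewrite /= big_cons [pair_excess x y]/pair_excess; ring.
Qed.

Lemma pair_energyE s :
  2 * pair_energy s =
  \sum_(z <- s) (2 * f z - pair_excess z z)
  + \sum_(z <- s) \sum_(w <- s) pair_excess z w.
Proof.
elim: s => [|a t IH] /=; first by rewrite !big_nil mulr0 addr0.
rewrite !big_cons /=.
under [\sum_(z <- t) \sum_(w <- a :: t) _]eq_bigr => z _
  do rewrite big_cons pair_excessC.
rewrite [\sum_(z <- t) (pair_excess a z + _)]big_split /= mulrDr IH; ring.
Qed.

Lemma pair_energy_perm s1 s2 :
  perm_eq s1 s2 -> pair_energy s1 = pair_energy s2.
Proof.
move=> s12; apply: (mulfI (_ : 2 != 0)); first by rewrite pnatr_eq0.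
rewrite !pair_energyE !(perm_big _ s12) /=.
by congr (_ + _); apply: eq_bigr => z _; rewrite (perm_big _ s12).
Qed.

End PairEnergy.

Section BalancedEnergy.
Variables (R : realDomainType) (f : R -> R).
Hypotheses (f0 : f 0 = 0) (fN : forall z, f (- z) = f z).
Hypothesis merge_defect_lt0 :
  forall x y z, 0 < x -> 0 < y -> 0 < z -> merge_defect f x y z < 0.

Lemma merge_defect_le0 x y z :
  0 < x -> 0 < y -> 0 <= z -> merge_defect f x y z <= 0.
Proof.
move=> x0 y0; rewrite le_eqVlt => /predU1P[<-|z0]; last exact/ltW/merge_defect_lt0.
by rewrite /merge_defect !addr0 f0; lra.
Qed.

Lemma merge_defect_balance x y u :
  merge_defect f x y (- (x + y + u)) = merge_defect f x y u.
Proof.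
have fE a b : a = - b -> f a = f b by move->; rewrite fN.
rewrite /merge_defect fN.
have -> : f (x - (x + y + u)) = f (y + u) by apply: fE; ring.
have -> : f (y - (x + y + u)) = f (x + u) by apply: fE; ring.
have -> : f (x + y - (x + y + u)) = f u by apply: fE; ring.
ring.
Qed.


Lemma pair_energy_balanced_merge x y t :
  pair_energy f (rcons [:: x, y & t] (- \sum_(z <- [:: x, y & t]) z)) =
  pair_energy f (rcons (x + y :: t) (- \sum_(z <- x + y :: t) z))
  + \sum_(z <- t) merge_defect f x y z + merge_defect f x y (\sum_(z <- t) z).
Proof.
have -> : \sum_(z <- [:: x, y & t]) z = \sum_(z <- x + y :: t) z.
  by rewrite !big_cons addrA.
rewrite !rcons_cons pair_energy_merge -rcons_cons big_rcons addrA.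
by rewrite big_cons merge_defect_balance.
Qed.

Lemma pair_energy_balanced_le0 P :
  all (fun z => 0 < z) P -> pair_energy f (rcons P (- \sum_(z <- P) z)) <= 0.
Proof.
have [n] := ubnP (size P); elim: n P => // n IH [|x [|y t]] ltPn.
- by rewrite big_nil oppr0 /= big_nil f0 addr0.
- by rewrite big_seq1 /= big_seq1 big_nil /pair_excess subrr f0 fN; lra.
case/and3P=> x0 y0 t0; rewrite pair_energy_balanced_merge.
have t_ge0 : {in t, forall z, 0 <= z} by move=> z /(allP t0) /ltW.
have le_merged : pair_energy f (rcons (x + y :: t) (- \sum_(z <- x + y :: t) z)) <= 0.
  apply: IH; first by rewrite ltnS in ltPn.
  by apply/andP; split=> //; apply: addr_gt0.
have le_defects : \sum_(z <- t) merge_defect f x y z <= 0.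
  by rewrite big_seq sumr_le0 // => z /t_ge0; apply: merge_defect_le0.
have le_last : merge_defect f x y (\sum_(z <- t) z) <= 0.
  by apply: merge_defect_le0; rewrite // big_seq sumr_ge0.
lra.
Qed.

Lemma pair_energy_balanced_lt0 P :
  all (fun z => 0 < z) P -> (2 < size P)%N ->
  pair_energy f (rcons P (- \sum_(z <- P) z)) < 0.
Proof.
case: P => [|x [|y [|w t]]] // P_gt0 _.
have [x0 y0 t0] : [/\ 0 < x, 0 < y & all (fun z => 0 < z) (w :: t)].
  by case/and3P: P_gt0.
rewrite pair_energy_balanced_merge.
have t_ge0 : {in w :: t, forall z, 0 <= z} by move=> z /(allP t0) /ltW.
have le_merged :
    pair_energy f (rcons (x + y :: w :: t) (- \sum_(z <- x + y :: w :: t) z)) <= 0.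
  by apply: pair_energy_balanced_le0; apply/andP; split=> //; apply: addr_gt0.
have le_defects : \sum_(z <- w :: t) merge_defect f x y z <= 0.
  by rewrite big_seq sumr_le0 // => z /t_ge0; apply: merge_defect_le0.
have lt_last : merge_defect f x y (\sum_(z <- w :: t) z) < 0.
  apply: merge_defect_lt0; rewrite // big_cons ltr_pwDl ?(allP t0 w) ?mem_head //.
  by rewrite big_seq sumr_ge0 // => z zt; apply: t_ge0; rewrite in_cons zt orbT.
lra.
Qed.

End BalancedEnergy.

Lemma strictly_convex_inner_lt (R : realType) (g : R -> R) a x h :
  strictly_convex_on_nonneg g -> 0 <= a -> 0 < x -> 0 < h ->
  g (a + x) + g (a + h) < g a + g (a + x + h).
Proof.
move=> g_sconvex a0 x0 h0.
have xh0 : 0 < x + h by lra.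
pose t := h / (x + h).
have t0 : 0 < t by rewrite divr_gt0.
have t1 : t < 1 by rewrite ltr_pdivrMr // mul1r; lra.
have a_neq : a != a + x + h by apply/negP => /eqP; lra.
have axh0 : 0 <= a + x + h by lra.
have t0' : 0 < 1 - t by lra.
have t1' : 1 - t < 1 by lra.
have := g_sconvex a (a + x + h) t a0 axh0 a_neq t0 t1.
have := g_sconvex a (a + x + h) (1 - t) a0 axh0 a_neq t0' t1'.
have -> : t * a + (1 - t) * (a + x + h) = a + x by rewrite /t; field; rewrite gt_eqF.
have -> : (1 - t) * a + (1 - (1 - t)) * (a + x + h) = a + h.
  by rewrite /t; field; rewrite gt_eqF.
lra.
Qed.

Section ConvexDerivative.
Local Open Scope classical_set_scope.
Variables (R : realType) (f df : R -> R).
Hypotheses (f0 : f 0 = 0) (f_cvg0 : f @ 0^'+ --> f 0).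
Hypothesis f_derive : forall x : R, 0 < x -> is_derive x 1 f (df x).
Hypothesis df_sconvex : strictly_convex_on_nonneg df.

Let fs (a : R) : R -> R := fun t => f (t + a).

Let fs_derive (a t : R) : 0 < t + a -> is_derive t 1 (fs a) (df (t + a)).
Proof.
move=> ta.
have := @is_derive1_comp _ f (shift a) t _ _ (f_derive ta) (is_derive_shift t 1 a).
by rewrite mulr1.
Qed.

Let fs_continuous (a t : R) : 0 < t + a -> {for t, continuous (fs a)}.
Proof.
move=> ta; apply/differentiable_continuous/derivable1_diffP.
exact: (fs_derive ta).(ex_derive).
Qed.

Lemma merge_defect_lt0_of_sconvex_derive (x y u : R) :
  0 < x -> 0 < y -> 0 < u -> merge_defect f x y u < 0.
Proof.
move=> x0 y0 u0.
pose phi : R -> R := fs (x + y) - fs x - fs y + f.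
pose dphi (t : R) := df (t + (x + y)) - df (t + x) - df (t + y) + df t.
have phi_derive (t : R) : 0 < t -> is_derive t 1 phi (dphi t).
  move=> t0; apply: is_deriveD; last exact: f_derive.
  by apply: is_deriveB; [apply: is_deriveB|]; apply: fs_derive; lra.
have phi_cont : {within `[0, u], continuous phi}.
  apply/continuous_within_itvP => //; split.
  - move=> t /[!in_itv] /= /andP[t0 _]; apply/differentiable_continuous.
    exact/derivable1_diffP/(phi_derive t t0).(ex_derive).
  - apply: cvgD => //; apply: cvgB; [apply: cvgB|];
      apply: cvg_at_right_filter; apply: fs_continuous; lra.
  - apply: cvg_at_left_filter; apply/differentiable_continuous.
    exact/derivable1_diffP/(phi_derive u u0).(ex_derive).
have phi_derive_in (t : R) : t \in `]0, u[%R -> is_derive t 1 phi (dphi t).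
  by move=> tI; apply: phi_derive; rewrite (itvP tI).
have [xi xi_in mvt] := MVT u0 phi_derive_in phi_cont.
have xi0 : 0 < xi by rewrite (itvP xi_in).
have dphi_gt0 : 0 < dphi xi.
  have := strictly_convex_inner_lt df_sconvex (ltW xi0) x0 y0.
  rewrite /dphi (addrA xi x y); lra.
have -> : merge_defect f x y u = phi 0 - phi u.
  have phiE t : phi t = f (t + (x + y)) - f (t + x) - f (t + y) + f t by [].
  rewrite !phiE /merge_defect !add0r f0 (addrC u (x + y)) (addrC u x) (addrC u y).
  ring.
rewrite -opprB mvt subr0 oppr_lt0; exact: mulr_gt0.
Qed.
End ConvexDerivative.

Section Dotv.
Variables (R : realType) (d : nat).
Implicit Types (v : 'rV[R]_d).

Lemma dotv_sumZ k (a : 'I_k -> R) (e : 'I_k -> 'rV[R]_d) :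
  dotv (\sum_i a i *: e i) (\sum_i a i *: e i) =
  \sum_i \sum_j a i * a j * dotv (e i) (e j).
Proof.
rewrite /dotv.
under eq_bigr => l _ do rewrite !summxE mulr_suml.
under eq_bigr => l _ do under eq_bigr => i _ do rewrite mulr_sumr.
rewrite exchange_big /=; apply: eq_bigr => i _.
rewrite exchange_big /=; apply: eq_bigr => j _.
by rewrite mulr_sumr; apply: eq_bigr => l _; rewrite !mxE; ring.
Qed.

Lemma dotv_ge0 v : 0 <= dotv v v.
Proof. by apply: sumr_ge0 => l _; rewrite -expr2 sqr_ge0. Qed.

Lemma dotv_eq0 v : dotv v v = 0 -> v = 0.
Proof.
move=> /eqP; rewrite psumr_eq0 => [/allP v0|l _]; last by rewrite -expr2 sqr_ge0.
apply/matrixP => i l; rewrite ord1 mxE.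
by have /v0 := mem_index_enum l; rewrite mulf_eq0 orbb => /eqP.
Qed.

End Dotv.

Lemma rank_lt_of_lin_rel (F : fieldType) n d (e : 'I_n -> 'rV[F]_d) (a : 'I_n -> F) i :
  a i != 0 -> \sum_j a j *: e j = 0 -> (\rank (\matrix_(j < n) e j) < n)%N.
Proof.
move=> ai0 rel; rewrite ltn_neqAle rank_leq_row andbT.
move: ai0; apply: contra => free.
have := mulmx_free_eq0 (\row_j a j) free.
rewrite mulmx_sum_row (eq_bigr (fun j => a j *: e j)); last first.
  by move=> j _; rewrite mxE rowK.
by rewrite rel eqxx => /esym/eqP/rowP/(_ i); rewrite !mxE => ->.
Qed.

Lemma admissible_c_gt0 (R : realType) (c : R -> R) z :
  admissible_c c -> z != 0 -> 0 < c z.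
Proof.
case=> [[c0 _] c_incr _ cN _]; case: (ltgtP z 0) => // z_sign _.
- by rewrite -cN -c0; apply: c_incr; rewrite ?oppr_gt0.
- by rewrite -c0; apply: c_incr.
Qed.

Section DifferenceQuotient.
Local Open Scope classical_set_scope.

Lemma cvg_at_right_of_diff_quotient (R : realType) (g : R -> R) (l : R) :
  (fun h => h^-1 * (g h - g 0)) @ 0^'+ --> l -> g @ 0^'+ --> g 0.
Proof.
move=> quot_cvg.
have : (fun h => g 0 + h * (h^-1 * (g h - g 0))) @ 0^'+ --> g 0 + 0 * l.
  apply: cvgD; first exact: cvg_cst.
  by apply: cvgM => //; apply: cvg_at_right_filter; exact: cvg_id.
rewrite mul0r addr0; apply: cvg_trans; apply: near_eq_cvg; near=> h.
have h0 : 0 < h by near: h; exact: nbhs_right_gt.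
by rewrite mulrA mulfV ?gt_eqF // mul1r addrC subrK.
Unshelve. all: by end_near.
Qed.

End DifferenceQuotient.

Lemma admissible_merge_defect_lt0 (R : realType) (c : R -> R) (x y z : R) :
  admissible_c c -> 0 < x -> 0 < y -> 0 < z ->
  merge_defect (fun w => c w ^+ 2) x y z < 0.
Proof.
case=> [[c0 _] _ _ _ [dc2 [c2_derive c2_quot_cvg dc2_sconvex]]].
apply: (merge_defect_lt0_of_sconvex_derive _ _ c2_derive dc2_sconvex).
- by rewrite c0 expr0n.
- exact: (@cvg_at_right_of_diff_quotient _ (fun w => c w ^+ 2) (dc2 0)).
Qed.

Lemma one_negative_balanced (R : realType) k (m : 'I_k -> R) :
  (forall i, m i != 0) -> \sum_i m i = 0 -> exactly_one_negative m ->
  exists P, [/\ all (fun z => 0 < z) P, size P = k.-1 &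
                perm_eq (codom m) (rcons P (- \sum_(z <- P) z))].
Proof.
move=> m_neq0 m_sum /eqP/card1P[i0 neg_i0].
have m_neg i : (m i < 0) = (i == i0).
  by rewrite -[RHS]neg_i0; apply/idP/idP => [/mem_set|/set_mem].
pose P := [seq m i | i <- enum 'I_k & i != i0].
have perm_m : perm_eq (codom m) (m i0 :: P).
  rewrite codomE -map_cons; apply: perm_map; rewrite -rem_filter ?enum_uniq //.
  by apply: perm_to_rem; rewrite mem_enum.
have m_i0 : m i0 = - \sum_(z <- P) z.
  have : \sum_(z <- codom m) z = 0 by rewrite codomE big_map big_enum.
  by rewrite (perm_big _ perm_m) big_cons => /eqP; rewrite addr_eq0 => /eqP.
exists P; split.
- apply/allP => z /mapP[i]; rewrite mem_filter => /andP[i_neq _] ->.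
  by rewrite lt0r m_neq0 /= leNgt m_neg.
- by have := perm_size perm_m; rewrite size_codom card_ord => ->.
- by rewrite -m_i0 perm_sym perm_rcons perm_sym.
Qed.

Lemma satisfactory_dotv_le_pair_energy (R : realType) (c : R -> R) d k
    (e : 'I_k -> 'rV[R]_d) (m : 'I_k -> R) :
  (forall i, 0 < c (m i)) -> satisfactory c e m ->
  dotv (\sum_i c (m i) *: e i) (\sum_i c (m i) *: e i) <=
  pair_energy (fun z => c z ^+ 2) (codom m).
Proof.
move=> c_gt0 [e_unit _ _ e_dot].
rewrite -(ler_pM2l (_ : 0 < 2)) // pair_energyE codomE !big_map.
under [X in _ <= _ + X]eq_bigr => i _ do rewrite big_map big_enum.
rewrite dotv_sumZ mulr_sumr -big_split /=; apply: ler_sum => i _.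
rewrite mulr_sumr (bigD1 i) // [X in _ <= _ + X](bigD1 i) //= e_unit.
rewrite [X in _ <= X]addrA subrK -expr2 mulr1 lerD2l.
apply: ler_sum => j ji.
have := e_dot i j; rewrite eq_sym => /(_ ji).
rewrite ler_pdivlMr; last by rewrite !mulr_gt0.
rewrite /pair_excess; lra.
Qed.

Section OneNegative.
Variables (R : realType) (c : R -> R) (d k : nat).
Variables (e : 'I_k -> 'rV[R]_d) (m : 'I_k -> R).
Hypotheses (c_adm : admissible_c c) (sat : satisfactory c e m).
Hypothesis one_neg : exactly_one_negative m.

Local Notation v := (\sum_i c (m i) *: e i).

Let f (z : R) := c z ^+ 2.

Let f0 : f 0 = 0.
Proof. by case: c_adm => [[c0 _] _ _ _ _]; rewrite /f c0 expr0n. Qed.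

Let fN z : f (- z) = f z.
Proof. by case: c_adm => _ _ _ cN _; rewrite /f cN. Qed.

Let f_defect_lt0 x y z : 0 < x -> 0 < y -> 0 < z -> merge_defect f x y z < 0.
Proof. exact: admissible_merge_defect_lt0. Qed.

Let dotv_le_balanced_energy :
  exists P, [/\ all (fun z => 0 < z) P, size P = k.-1 &
                dotv v v <= pair_energy f (rcons P (- \sum_(z <- P) z))].
Proof.
case: (sat) => _ m_neq0 m_sum _.
have [P [P_gt0 size_P perm_m]] := one_negative_balanced m_neq0 m_sum one_neg.
exists P; split=> //; rewrite -(pair_energy_perm _ perm_m).
apply: satisfactory_dotv_le_pair_energy sat => i.
exact: admissible_c_gt0 c_adm (m_neq0 i).
Qed.

Lemma one_negative_dotv_le0 : dotv v v <= 0.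
Proof.
have [P [P_gt0 _ le_energy]] := dotv_le_balanced_energy.
exact: le_trans le_energy (pair_energy_balanced_le0 f0 fN f_defect_lt0 P_gt0).
Qed.

Lemma one_negative_dotv_lt0 : (3 < k)%N -> dotv v v < 0.
Proof.
move=> k_gt3; have [P [P_gt0 size_P le_energy]] := dotv_le_balanced_energy.
have size_gt2 : (2 < size P)%N by rewrite size_P -ltnS prednK // (ltn_trans _ k_gt3).
exact: le_lt_trans le_energy (pair_energy_balanced_lt0 f0 fN f_defect_lt0 P_gt0 size_gt2).
Qed.

End OneNegative.

Theorem theorem3 (R : realType) (c : R -> R) (d : nat) :
  (2 <= d)%N -> admissible_c c ->
  (forall (k : nat) (e : 'I_k -> 'rV[R]_d) (m : 'I_k -> R),
      (3 < k)%N -> ~ (satisfactory c e m /\ exactly_one_negative m)) /\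
  (forall (e : 'I_3 -> 'rV[R]_d) (m : 'I_3 -> R),
      satisfactory c e m -> exactly_one_negative m ->
      (\rank (\matrix_(i < 3) e i) <= 2)%N).
Proof.
move=> _ c_adm; split=> [k e m k_gt3 [sat one_neg] | e m sat one_neg].
  have := one_negative_dotv_lt0 c_adm sat one_neg k_gt3.
  by rewrite ltNge dotv_ge0.
have v0 : \sum_i c (m i) *: e i = 0.
  apply/dotv_eq0/eqP; rewrite eq_le dotv_ge0 andbT.
  exact: one_negative_dotv_le0 c_adm sat one_neg.
case: sat => _ m_neq0 _ _.
apply: (rank_lt_of_lin_rel (i := 0) _ v0).
by rewrite gt_eqF // (admissible_c_gt0 c_adm (m_neq0 0)).
Qed.
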